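(* Let $\mathbf{Q}=\langle Q;\oplus,-,{}^+,{}^-,0,1\rangle$ be a strong quasi-MV* algebra. For $x,y\in Q$ define $x\to y:=-x\oplus y$ and $\neg x:=-x$. Then $f(\mathbf{Q})=\langle Q;\to,\neg,{}^+,{}^-,1\rangle$ is a strong quasi-Wajsberg* algebra (with $x\vee y:=((x^{+}\to y^{+})^{+}\to(\neg x)^{-})\to((y^{-}\to x^{-})^{-}\to x^{-})$).
   Context: A quasi-MV* algebra is an algebra $\langle A;\oplus,-,{}^{+},{}^{-},0,1\rangle$ of type $\langle 2,1,1,1,0,0\rangle$ (${}^+,{}^-$ bind more tightly than $-$, which binds more tightly than $\oplus$; $-1$ denotes $-(1)$) such that for all $x,y,z$: (1) $x\oplus y=y\oplus x$; (2) $(1\oplus x)\oplus(y\oplus(1\oplus z))=((1\oplus x)\oplus y)\oplus(1\oplus z)$; (3) $(x\oplus 1)\oplus 1=1$; (4) $(x\oplus y)\oplus 0=x\oplus y$; (5) $x^{+}\oplus 0=(x\oplus 0)^{+}=1\oplus(-1\oplus x)$ and $x^{-}\oplus 0=(x\oplus 0)^{-}=-1\oplus(1\oplus x)$; (6) $x\oplus y=(x^{+}\oplus y^{+})\oplus(x^{-}\oplus y^{-})$; (7) $0=-0$; (8) $x\oplus(-x)=0$; (9) $-(x\oplus y)=(-x)\oplus(-y)$; (10) $-(-x)=x$; (11) $(-x\oplus(x\oplus y))^{+}=-x^{+}\oplus(x^{+}\oplus y^{+})$; (12) $x\vee y=y\vee x$; (13) $x\vee(y\vee z)=(x\vee y)\vee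 z$; (14) $x\oplus(y\vee z)=(x\oplus y)\vee(x\oplus z)$; where $x\vee y:=(x^{+}\oplus(-x^{+}\oplus y^{+})^{+})\oplus(x^{-}\oplus(-x^{-}\oplus y^{-})^{+})$. A strong quasi-MV* algebra is a quasi-MV* algebra satisfying $x^+=x^+\oplus 0$ and $x^-=x^-\oplus 0$. A quasi-Wajsberg* algebra is an algebra $\langle W;\to,\neg,{}^+,{}^-,1\rangle$ of type $\langle 2,1,1,1,0\rangle$ (${}^+,{}^-$ bind more tightly than $\neg$, which binds more tightly than $\to$) such that for all $x,y,z$: (1) $x\to y=\neg y\to\neg x$; (2) $(x\to 1)\to((y\to 1)\to z)=(y\to 1)\to((x\to 1)\to z)$; (3) $(1\to x)\to 1=1$; (4) $(z\to z)\to(x\to y)=x\to y$; (5) $(1\to 1)\to x^{+}=((1\to 1)\to x)^{+}=(x\to 1)\to 1$ and $(1\to 1)\to x^{-}=((1\to 1)\to x)^{-}=(x\to\neg 1)\to\neg 1$; (6) $x\to y=(y^{+}\to x^{-})\to(x^{+}\to y^{-})$; (7) $\neg(x\to y)=y\to x$; (8) $\neg\neg x=x$; (9) $(x\to(\neg x\to y))^{+}=x^{+}\to(\neg x^{+}\to y^{+})$; (10) $x\vee y=y\vee x$; (11) $x\vee(y\vee z)=(x\vee y)\vee z$; (12) $x\to(y\vee z)=(x\to y)\vee(x\to z)$; where $x\vee y:=((x^{+}\to y^{+})^{+}\to(\neg x)^{-})\to((y^{-}\to x^{-})^{-}\to x^{-})$. A strong quasi-Wajsberg* algebra is a quasi-Wajsberg*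 algebra satisfying $x^+=(1\to 1)\to x^+$ and $x^-=(1\to 1)\to x^-$ for all $x$. *)

Definition qmv_join {A : Type} (oplus : A -> A -> A) (opp pl mi : A -> A)
  (x y : A) : A :=
  oplus (oplus (pl x) (pl (oplus (opp (pl x)) (pl y))))
        (oplus (mi x) (pl (oplus (opp (mi x)) (mi y)))).

Record quasi_MVstar {A : Type} (oplus : A -> A -> A) (opp pl mi : A -> A)
    (zero one : A) : Prop := {
  qmv1 : forall x y, oplus x y = oplus y x;
  qmv2 : forall x y z, oplus (oplus one x) (oplus y (oplus one z))
                     = oplus (oplus (oplus one x) y) (oplus one z);
  qmv3 : forall x, oplus (oplus x one) one = one;
  qmv4 : forall x y, oplus (oplus x y) zero = oplus x y;
  qmv5a : forall x, oplus (pl x) zero = pl (oplus x zero);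
  qmv5b : forall x, pl (oplus x zero) = oplus one (oplus (opp one) x);
  qmv5c : forall x, oplus (mi x) zero = mi (oplus x zero);
  qmv5d : forall x, mi (oplus x zero) = oplus (opp one) (oplus one x);
  qmv6 : forall x y, oplus x y = oplus (oplus (pl x) (pl y)) (oplus (mi x) (mi y));
  qmv7 : zero = opp zero;
  qmv8 : forall x, oplus x (opp x) = zero;
  qmv9 : forall x y, opp (oplus x y) = oplus (opp x) (opp y);
  qmv10 : forall x, opp (opp x) = x;
  qmv11 : forall x y, pl (oplus (opp x) (oplus x y))
                    = oplus (opp (pl x)) (oplus (pl x) (pl y));
  qmv12 : forall x y, qmv_join oplus opp pl mi x y = qmv_join oplus opp pl mi y x;
  qmv13 : forall x y z, qmv_join oplus opp pl mi x (qmv_join oplus opp pl mi y z)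
                      = qmv_join oplus opp pl mi (qmv_join oplus opp pl mi x y) z;
  qmv14 : forall x y z, oplus x (qmv_join oplus opp pl mi y z)
                      = qmv_join oplus opp pl mi (oplus x y) (oplus x z)
}.

Definition strong_quasi_MVstar {A : Type} (oplus : A -> A -> A)
    (opp pl mi : A -> A) (zero one : A) : Prop :=
  quasi_MVstar oplus opp pl mi zero one /\
  (forall x, pl x = oplus (pl x) zero) /\
  (forall x, mi x = oplus (mi x) zero).

Definition qw_join {A : Type} (imp : A -> A -> A) (neg pl mi : A -> A)
  (x y : A) : A :=
  imp (imp (pl (imp (pl x) (pl y))) (mi (neg x)))
      (imp (mi (imp (mi y) (mi x))) (mi x)).

Record quasi_Wstar {A : Type} (imp : A -> A -> A) (neg pl mi : A -> A)
    (one : A) : Prop := {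
  qw1 : forall x y, imp x y = imp (neg y) (neg x);
  qw2 : forall x y z, imp (imp x one) (imp (imp y one) z)
                    = imp (imp y one) (imp (imp x one) z);
  qw3 : forall x, imp (imp one x) one = one;
  qw4 : forall x y z, imp (imp z z) (imp x y) = imp x y;
  qw5a : forall x, imp (imp one one) (pl x) = pl (imp (imp one one) x);
  qw5b : forall x, pl (imp (imp one one) x) = imp (imp x one) one;
  qw5c : forall x, imp (imp one one) (mi x) = mi (imp (imp one one) x);
  qw5d : forall x, mi (imp (imp one one) x) = imp (imp x (neg one)) (neg one);
  qw6 : forall x y, imp x y = imp (imp (pl y) (mi x)) (imp (pl x) (mi y));
  qw7 : forall x y, neg (imp x y) = imp y x;
  qw8 : forall x, neg (neg x) = x;
  qw9 : forall x y, pl (imp x (imp (neg x) y))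
                  = imp (pl x) (imp (neg (pl x)) (pl y));
  qw10 : forall x y, qw_join imp neg pl mi x y = qw_join imp neg pl mi y x;
  qw11 : forall x y z, qw_join imp neg pl mi x (qw_join imp neg pl mi y z)
                     = qw_join imp neg pl mi (qw_join imp neg pl mi x y) z;
  qw12 : forall x y z, imp x (qw_join imp neg pl mi y z)
                     = qw_join imp neg pl mi (imp x y) (imp x z)
}.

Definition strong_quasi_Wstar {A : Type} (imp : A -> A -> A)
    (neg pl mi : A -> A) (one : A) : Prop :=
  quasi_Wstar imp neg pl mi one /\
  (forall x, pl x = imp (imp one one) (pl x)) /\
  (forall x, mi x = imp (imp one one) (mi x)).

Definition qmv_imp {A : Type} (oplus : A -> A -> A) (opp : A -> A) (x y : A) : A :=
  oplus (opp x) y.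


(* Under x -> y := -x (+) y every quasi-Wajsberg* axiom is an instance of the
   matching quasi-MV* axiom once - is pushed inwards with (9) and (10).  The
   two extra ingredients are z -> z = 0, from (7) and (8), and, in a strong
   algebra, (-x)^+ = -(x^-), which makes the two joins coincide literally. *)

Section StrongQuasiMVstar.

Context {A : Type} {oplus : A -> A -> A} {opp pl mi : A -> A} {zero one : A}.
Hypothesis HQ : quasi_MVstar oplus opp pl mi zero one.
Hypothesis pl_oplus0 : forall x, pl x = oplus (pl x) zero.
Hypothesis mi_oplus0 : forall x, mi x = oplus (mi x) zero.

Local Notation imp := (qmv_imp oplus opp).

Let addC : forall x y, oplus x y = oplus y x := qmv1 _ _ _ _ _ _ HQ.
Let oppD : forall x y, opp (oplus x y) = oplus (opp x) (opp y) :=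
  qmv9 _ _ _ _ _ _ HQ.
Let oppK : forall x, opp (opp x) = x := qmv10 _ _ _ _ _ _ HQ.

Lemma opp_inj (x y : A) : opp x = opp y -> x = y.
Proof. intros Exy. rewrite <- (oppK x), Exy. apply oppK. Qed.

Lemma pl_opp (x : A) : pl (opp x) = opp (mi x).
Proof.
  case HQ; intros.
  rewrite pl_oplus0, qmv5a, qmv5b, mi_oplus0, qmv5c, qmv5d, !oppD, oppK.
  reflexivity.
Qed.

Lemma mi_opp (x : A) : mi (opp x) = opp (pl x).
Proof. rewrite <- (oppK (mi (opp x))), <- pl_opp, oppK. reflexivity. Qed.

Lemma imp_self_l (z y : A) : imp (imp z z) y = oplus y zero.
Proof.
  case HQ; intros. unfold qmv_imp.
  rewrite (addC (opp z)), qmv8, <- qmv7. apply addC.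
Qed.

Lemma oplus_oneCA (a b w : A) :
  oplus (oplus one a) (oplus (oplus one b) w)
  = oplus (oplus one b) (oplus (oplus one a) w).
Proof. case HQ; intros. rewrite (addC (oplus one b) w), qmv2. apply addC. Qed.

Lemma imp_exchange (x y z : A) :
  imp (imp x one) (imp (imp y one) z) = imp (imp y one) (imp (imp x one) z).
Proof.
  apply opp_inj. unfold qmv_imp.
  rewrite !oppD, !oppK, (addC (opp x)), (addC (opp y)).
  apply oplus_oneCA.
Qed.

Lemma qw_join_qmv_imp (x y : A) :
  qw_join imp opp pl mi x y = qmv_join oplus opp pl mi x y.
Proof.
  unfold qw_join, qmv_join, qmv_imp.
  rewrite !oppD, !oppK, mi_opp, oppK, <- pl_opp, oppD, oppK.
  rewrite (addC (pl (oplus (opp (pl x)) (pl y))) (pl x)).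
  rewrite (addC (pl _) (mi x)), (addC (mi y)). reflexivity.
Qed.

Lemma qmv_imp_quasi_Wstar : quasi_Wstar imp opp pl mi one.
Proof.
  case HQ; intros. constructor.
  - intros x y. unfold qmv_imp. rewrite oppK. apply addC.
  - exact imp_exchange.
  - intros x. unfold qmv_imp. rewrite oppD, oppK, (addC one (opp x)). apply qmv3.
  - intros x y z. rewrite imp_self_l. apply qmv4.
  - intros x. rewrite !imp_self_l. apply qmv5a.
  - intros x. rewrite imp_self_l. unfold qmv_imp.
    rewrite qmv5b, oppD, oppK, (addC x (opp one)). apply addC.
  - intros x. rewrite !imp_self_l. apply qmv5c.
  - intros x. rewrite imp_self_l. unfold qmv_imp.
    rewrite qmv5d, oppD, !oppK, (addC x one). apply addC.
  - intros x y. unfold qmv_imp.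
    rewrite oppD, !oppK, (qmv6 (opp x) y), pl_opp, mi_opp, (addC (opp (mi x))).
    reflexivity.
  - intros x y. unfold qmv_imp. rewrite oppD, oppK. apply addC.
  - exact oppK.
  - intros x y. unfold qmv_imp. rewrite !oppK. apply qmv11.
  - intros x y. rewrite !qw_join_qmv_imp. apply qmv12.
  - intros x y z. rewrite !qw_join_qmv_imp. apply qmv13.
  - intros x y z. rewrite !qw_join_qmv_imp. apply qmv14.
Qed.

Lemma pl_imp_self_l (x : A) : pl x = imp (imp one one) (pl x).
Proof. rewrite imp_self_l. apply pl_oplus0. Qed.

Lemma mi_imp_self_l (x : A) : mi x = imp (imp one one) (mi x).
Proof. rewrite imp_self_l. apply mi_oplus0. Qed.

End StrongQuasiMVstar.

Theorem proposition3p4 (Q : Type) (oplus : Q -> Q -> Q) (opp pl mi : Q -> Q)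
  (zero one : Q) :
  strong_quasi_MVstar oplus opp pl mi zero one ->
  strong_quasi_Wstar (qmv_imp oplus opp) opp pl mi one.
Proof.
  intros [HQ [Hpl Hmi]]. split; [| split].
  - exact (qmv_imp_quasi_Wstar HQ Hpl Hmi).
  - exact (pl_imp_self_l HQ Hpl).
  - exact (mi_imp_self_l HQ Hmi).
Qed.
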